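(* Let $\rhd$ be a functional value system. Then for every type $\sigma$, the relation $\rhd_\sigma$ is functional (for every term $s$ there is at most one $a$ with $s\rhd_\sigma a$).
   Context: Types: a countable set of base types ($\beta$); every base type is a type and $\sigma\tau$ is a type for types $\sigma,\tau$. Countably many names, each with a unique type, infinitely many of each type. Terms: names; $st:\mu$ for $s:\tau\mu,t:\tau$; $\lambda x.t:\sigma\tau$ for a name $x:\sigma$, $t:\tau$. $\mathrm{Wff}_\sigma$ is the set of terms of type $\sigma$. A fixed type-preserving total normalization operator $[\cdot]$ on terms is given with $[[s]]=[s]$ and $[[s]t]=[st]$. A value system is a function $\rhd$ mapping each base type $\beta$ to a binary relation $\rhd_\beta$ with $\mathrm{Dom}(\rhd_\beta)\subseteq\mathrm{Wff}_\beta$ and such that $s\rhd_\beta a$ iff $[s]\rhd_\beta a$. It is extended to all types by induction: $\mathcal{D}\sigma:=\mathrm{Ran}(\rhd_\sigma)$ and $\rhd_{\sigma\tau}:=\{(s,f)\in\mathrm{Wff}_{\sigma\tau}\times(\mathcal{D}\sigma\to\mathcal{D}\tau) : \forall (t,a)\in\rhd_\sigma,\ (st,fa)\in\rhd_\tau\}$. A value system is functional if $\rhd_\beta$ is a functional relation for every base type $\beta$. *)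

(* Types: base types indexed by nat (a countable set), and arrow types.
   [Arr s t] is the paper's type [s t] (functions from s to t). *)
Inductive ty : Type :=
| Base : nat -> ty
| Arr : ty -> ty -> ty.

(* Intrinsically typed terms.  Names of type [s] are [Var s n], n : nat
   (countably many names, each with a unique type, infinitely many of each
   type).  [tm s] is Wff_s. *)
Inductive tm : ty -> Type :=
| Var : forall (s : ty), nat -> tm s
| App : forall (s t : ty), tm (Arr s t) -> tm s -> tm t
| Lam : forall (s t : ty), nat -> tm t -> tm (Arr s t).

Arguments App {s t} _ _.

Definition is_normalizer (norm : forall s, tm s -> tm s) : Prop :=
  (forall s (u : tm s), norm s (norm s u) = norm s u) /\
  (forall s t (u : tm (Arr s t)) (v : tm s),
      norm t (App (norm (Arr s t) u) v) = norm t (App u v)).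

(* Base data of a value system: for each base type b a carrier [V b] of
   possible values and a relation [R b : Wff_b x V b].  (Dom(R b) ⊆ Wff_b
   holds by construction.)  The value-system axiom: s R a iff [s] R a. *)
Definition is_value_system (norm : forall s, tm s -> tm s)
  (V : nat -> Type) (R : forall b, tm (Base b) -> V b -> Prop) : Prop :=
  forall b (u : tm (Base b)) (a : V b), R b u a <-> R b (norm (Base b) u) a.

Definition functional_rel {A B : Type} (r : A -> B -> Prop) : Prop :=
  forall x y1 y2, r x y1 -> r x y2 -> y1 = y2.

(* Extension to all types.  [sem s] packages a carrier type and the relation
   |>_s.  For arrow types the carrier is the type of functions D s -> D t,
   where D s := Ran(|>_s) is the subtype of values in the range of |>_s.
   f : D s -> D t is related to u iff for all (v, a) in |>_s,
   (u v, f a) in |>_t. *)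
Fixpoint sem (V : nat -> Type) (R : forall b, tm (Base b) -> V b -> Prop)
  (s : ty) : { C : Type & tm s -> C -> Prop } :=
  match s return { C : Type & tm s -> C -> Prop } with
  | Base b => existT _ (V b) (R b)
  | Arr s1 s2 =>
      let S1 := sem V R s1 in
      let S2 := sem V R s2 in
      existT (fun C => tm (Arr s1 s2) -> C -> Prop)
        ({a : projT1 S1 | exists v, projT2 S1 v a} ->
         {a : projT1 S2 | exists v, projT2 S2 v a})
        (fun u f => forall (v : tm s1) (a : {a : projT1 S1 | exists v, projT2 S1 v a}),
            projT2 S1 v (proj1_sig a) ->
            projT2 S2 (App u v) (proj1_sig (f a)))
  end.

Definition carrier V R s : Type := projT1 (sem V R s).
Definition vrel V R s : tm s -> carrier V R s -> Prop := projT2 (sem V R s).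

From Stdlib Require Import FunctionalExtensionality ProofIrrelevance.

(* Two arrow values related to the same term agree on every value [a] of the
   domain, because [a] is by definition the value of some term [v], and then
   both [f a] and [g a] are values of [App u v]. *)

Lemma range_fun_eq {A B : Type} (P : A -> Prop) (Q : B -> Prop)
    (f g : {a : A | P a} -> {b : B | Q b}) :
  (forall a, proj1_sig (f a) = proj1_sig (g a)) -> f = g.
Proof.
  intros Hfg; apply functional_extensionality; intros a.
  apply eq_sig_hprop; [intros; apply proof_irrelevance | apply Hfg].
Qed.

Lemma vrel_Arr_functional V R (s1 s2 : ty) :
  functional_rel (vrel V R s2) -> functional_rel (vrel V R (Arr s1 s2)).
Proof.
  intros Hfun2 u f g Hf Hg.
  apply range_fun_eq; intros [a [v Hv]].
  exact (Hfun2 _ _ _ (Hf v (exist _ a (ex_intro _ v Hv)) Hv)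
                     (Hg v (exist _ a (ex_intro _ v Hv)) Hv)).
Qed.

Theorem proposition3p2
  (norm : forall s, tm s -> tm s) (Hnorm : is_normalizer norm)
  (V : nat -> Type) (R : forall b, tm (Base b) -> V b -> Prop)
  (Hvs : is_value_system norm V R)
  (Hfun : forall b, functional_rel (R b)) :
  forall s : ty, functional_rel (vrel V R s).
Proof.
  induction s as [b | s1 _ s2 IH2].
  - exact (Hfun b).
  - exact (vrel_Arr_functional V R s1 s2 IH2).
Qed.
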